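(* Suppose that for every complement critical graph $G$ on $n$ vertices one has ${\rm mvr}(G)+{\rm mvr}(\overline{G})\le n+2$. Then for every simple graph $G$ on $n$ vertices, ${\rm mvr}(G)+{\rm mvr}(\overline{G})\le n+2$, and consequently also ${\rm mr}_+(G)+{\rm mr}_+(\overline{G})\le n+2$ and ${\rm mr}(G)+{\rm mr}(\overline{G})\le n+2$ for every simple graph $G$ on $n$ vertices.
   Context: All graphs are finite and simple with nonempty vertex set; $\overline{G}$ denotes the complement of $G$ and $|G|$ its number of vertices. An orthogonal vector representation of a graph $G=(V,E)$ in $\mathbb{R}^d$ is a map $\phi:V\to\mathbb{R}^d$ with $\phi(v)\neq 0$ for all $v$, and for distinct $u,v$: $\langle\phi(u),\phi(v)\rangle=0$ if and only if $uv\notin E$. The minimum vector rank ${\rm mvr}(G)$ is the smallest $d$ for which such a representation exists. For a graph $G$ on vertices $1,\dots,n$, ${\rm mr}(G)$ is the minimum rank of an $n\times n$ Hermitian matrix $M$ with $M_{ij}\neq 0$ (for $i\neq j$) if and only if $ij$ is an edge; ${\rm mr}_+(G)$ is the same minimum taken over positive semidefinite such $M$. A graph $G$ is complement critical if for every proper induced subgraph $H$ of $G$ (with nonempty vertex set), ${\rm mvr}(H)+{\rm mvr}(\overline{H})<{\rm mvr}(G)+{\rm mvr}(\overline{G})$. *)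

From HB Require Import structures.
From mathcomp Require Import all_boot all_order all_algebra.
From mathcomp Require Import boolp reals Rstruct complex.
Set Implicit Arguments. Unset Strict Implicit. Unset Printing Implicit Defensive.
Import Order.TTheory GRing.Theory Num.Theory.
Local Open Scope ring_scope.

Notation RR := Rdefinitions.R.
Notation CC := (complex RR).

Definition simple_graph (V : finType) (e : rel V) : Prop :=
  symmetric e /\ irreflexive e.

Definition compl_graph (V : finType) (e : rel V) : rel V :=
  fun x y => (x != y) && ~~ e x y.

Definition induced (V : finType) (e : rel V) (S : {set V})
  : rel {x : V | x \in S} := fun x y => e (val x) (val y).
Arguments induced {V} e S.

Definition dotR (d : nat) (a b : 'rV[RR]_d) : RR := (a *m b^T) 0 0.

Definition ortho_rep (V : finType) (e : rel V) (d : nat)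
    (phi : V -> 'rV[RR]_d) : Prop :=
  (forall v, phi v != 0) /\
  (forall u v, u != v -> (dotR (phi u) (phi v) == 0) = ~~ e u v).

Definition has_ortho_rep (V : finType) (e : rel V) (d : nat) : Prop :=
  exists phi : V -> 'rV[RR]_d, ortho_rep e phi.

(* Least nat satisfying a (classical) predicate, 0 if none exists. *)
Definition least_nat (P : nat -> Prop) : nat :=
  match pselect (exists n, `[< P n >]) with
  | left H => ex_minn H
  | right _ => 0%N
  end.

Definition mvr (V : finType) (e : rel V) : nat :=
  least_nat (fun d => has_ortho_rep e d).

Definition complement_critical (V : finType) (e : rel V) : Prop :=
  forall S : {set V}, S != set0 -> S \proper [set: V] ->
    (mvr (induced e S) + mvr (compl_graph (induced e S))
      < mvr e + mvr (compl_graph e))%N.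

Definition hermitian (n : nat) (M : 'M[CC]_n) : Prop :=
  forall i j, M j i = (M i j)^*.

Definition psd (n : nat) (M : 'M[CC]_n) : Prop :=
  hermitian M /\
  forall x : 'cV[CC]_n, 0 <= ((map_mx Num.conj x)^T *m M *m x) 0 0.

Definition fits (n : nat) (e : rel 'I_n) (M : 'M[CC]_n) : Prop :=
  forall i j, i != j -> (M i j != 0) = e i j.

Definition mr (n : nat) (e : rel 'I_n) : nat :=
  least_nat (fun r => exists M : 'M[CC]_n, [/\ hermitian M, fits e M & \rank M = r]).

Definition mr_plus (n : nat) (e : rel 'I_n) : nat :=
  least_nat (fun r => exists M : 'M[CC]_n, [/\ psd M, fits e M & \rank M = r]).

From HB Require Import structures.
From mathcomp Require Import all_boot all_order all_algebra.
From mathcomp Require Import boolp reals Rstruct complex.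
Set Implicit Arguments. Unset Strict Implicit. Unset Printing Implicit Defensive.
Import Order.TTheory GRing.Theory Num.Theory.
Local Open Scope ring_scope.

(* The mvr bound goes by induction on the number of vertices: a graph that is
   not complement critical has a proper nonempty induced subgraph H with
   mvr(H) + mvr(co-H) >= mvr(G) + mvr(co-G), and H has fewer vertices.
   For the matrix ranks, the Gram matrix of an orthogonal representation in
   R^d is a positive semidefinite Hermitian matrix with the off-diagonal zero
   pattern of G and rank at most d, whence mr <= mr_+ <= mvr. *)

Lemma least_nat_le (P : nat -> Prop) m : P m -> (least_nat P <= m)%N.
Proof.
rewrite /least_nat; case: pselect => [H|//] Pm.
by case: ex_minnP => k _; apply; apply/asboolP.
Qed.

Lemma least_natP (P : nat -> Prop) : (exists m, P m) -> P (least_nat P).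
Proof.
move=> [m Pm]; rewrite /least_nat; case: pselect => [H|H].
  by case: ex_minnP => k /asboolP.
by case: H; exists m; apply/asboolP.
Qed.

Section GraphEmbedding.

Variables (V W : finType) (e : rel V) (e' : rel W) (f : V -> W).
Hypothesis f_mono : {mono f : x y / e x y >-> e' x y}.

Lemma simple_graph_pullback : simple_graph e' -> simple_graph e.
Proof.
case=> e'_sym e'_irr; split=> [x y|x]; first by rewrite -!f_mono e'_sym.
by rewrite -f_mono e'_irr.
Qed.

Hypothesis f_inj : injective f.

Lemma compl_graph_mono :
  {mono f : x y / compl_graph e x y >-> compl_graph e' x y}.
Proof. by move=> x y; rewrite /compl_graph f_mono (inj_eq f_inj). Qed.

Lemma has_ortho_rep_pullback d : has_ortho_rep e' d -> has_ortho_rep e d.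
Proof.
case=> phi [phi_nz phi_orth]; exists (phi \o f); split=> [v|u v uv] /=.
  exact: phi_nz.
by rewrite phi_orth ?f_mono ?(inj_eq f_inj).
Qed.

End GraphEmbedding.

Lemma mvr_iso (V W : finType) (e : rel V) (e' : rel W) (f : V -> W) :
  bijective f -> {mono f : x y / e x y >-> e' x y} -> mvr e = mvr e'.
Proof.
case=> g fK gK f_mono; have g_mono := can_mono gK f_mono.
rewrite /mvr; congr least_nat; apply: funext => d; apply: propext.
split; [exact: has_ortho_rep_pullback g_mono (can_inj gK) d
       | exact: has_ortho_rep_pullback f_mono (can_inj fK) d].
Qed.

Lemma mvr_compl_iso (V W : finType) (e : rel V) (e' : rel W) (f : V -> W) :
  bijective f -> {mono f : x y / e x y >-> e' x y} ->
  mvr (compl_graph e) = mvr (compl_graph e').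
Proof.
move=> f_bij f_mono; apply: (mvr_iso f_bij).
exact: compl_graph_mono f_mono (bij_inj f_bij).
Qed.

Definition relabel (V : finType) (e : rel V) : rel 'I_#|V| :=
  fun a b => e (enum_val a) (enum_val b).

Lemma relabel_mono (V : finType) (e : rel V) :
  {mono @enum_rank V : x y / e x y >-> relabel e x y}.
Proof. by move=> x y; rewrite /relabel !enum_rankK. Qed.

Lemma enum_rank_bij (V : finType) : bijective (@enum_rank V).
Proof. exact: (Bijective (@enum_rankK _) (@enum_valK _)). Qed.

Lemma noncritical_witness (V : finType) (e : rel V) :
  ~ complement_critical e ->
  exists S : {set V}, [/\ S != set0, S \proper [set: V] &
    (mvr e + mvr (compl_graph e)
      <= mvr (induced e S) + mvr (compl_graph (induced e S)))%N].
Proof.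
move=> not_crit; apply: contra_notP not_crit => no_witness S S0 S_proper.
by rewrite ltnNge; apply/negP => S_le; apply: no_witness; exists S.
Qed.

Section CriticalReduction.

Hypothesis critical_bound : forall (n : nat) (e : rel 'I_n), (0 < n)%N ->
  simple_graph e -> complement_critical e ->
  (mvr e + mvr (compl_graph e) <= n + 2)%N.

Lemma mvr_sum_bound (n : nat) (e : rel 'I_n) : (0 < n)%N -> simple_graph e ->
  (mvr e + mvr (compl_graph e) <= n + 2)%N.
Proof.
elim/ltn_ind: n e => n IH e n_gt0 e_simple.
have [e_crit|/noncritical_witness[S [S_gt0 S_proper S_le]]] :=
  pselect (complement_critical e); first exact: critical_bound.
apply: leq_trans S_le _.
have S_lt_n : (#|S| < n)%N.
  by have := proper_card S_proper; rewrite cardsT card_ord.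
have card_sub : #|{: {x | x \in S}}| = #|S| by rewrite card_sig.
have sub_mono := relabel_mono (induced e S).
rewrite (mvr_iso (enum_rank_bij _) sub_mono).
rewrite (mvr_compl_iso (enum_rank_bij _) sub_mono).
apply: leq_trans (IH _ _ _ _ _) _.
- by rewrite card_sub.
- by rewrite card_sub card_gt0.
- apply: (simple_graph_pullback (can_mono (@enum_valK _) sub_mono)).
  by apply: (@simple_graph_pullback _ _ _ e val).
- by rewrite card_sub leq_add2r ltnW.
Qed.

End CriticalReduction.

Lemma dotRE d (a b : 'rV[RR]_d) : dotR a b = \sum_k a 0 k * b 0 k.
Proof. by rewrite /dotR mxE; apply: eq_bigr => k _; rewrite mxE. Qed.

(* Coordinates are indexed by the pairs (a, b) with a = b or ab an edge, and
   phi v is the indicator of the pairs containing v: distinct vertices share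
   such a pair exactly when they are adjacent. *)
Lemma has_ortho_rep_incidence (V : finType) (e : rel V) : symmetric e ->
  has_ortho_rep e #|{: V * V}|.
Proof.
move=> e_sym.
pose inc (v : V) (p : V * V) :=
  (v \in [:: p.1; p.2]) && ((p.1 == p.2) || e p.1 p.2).
exists (fun v => \row_k (inc v (enum_val k))%:R); split=> [v|u v uv].
  apply/eqP => /rowP/(_ (enum_rank (v, v))).
  by rewrite !mxE enum_rankK /inc /= !inE !eqxx /= => /eqP; rewrite oner_eq0.
rewrite dotRE.
under eq_bigr do rewrite !mxE -natrM mulnb.
rewrite -natr_sum pnatr_eq0 sum_nat_eq0.
apply/forallP/idP => [no_common|uv_nedge k].
  apply/negP => uv_edge.
  have := no_common (enum_rank (u, v)).
  by rewrite enum_rankK /inc /= !inE !eqxx uv_edge !orbT.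
case: (enum_val k) => a b; rewrite /inc /= !inE eqb0.
apply/negP => /and3P[/andP[/orP[]/eqP uE ab] /orP[]/eqP vE _]; subst u v.
- by rewrite eqxx in uv.
- by rewrite (negbTE uv) /= (negbTE uv_nedge) in ab.
- by rewrite eq_sym (negbTE uv) /= e_sym (negbTE uv_nedge) in ab.
- by rewrite eqxx in uv.
Qed.

Lemma psd_mul_adj n d (B : 'M[CC]_(n, d)) : psd (B *m (map_mx Num.conj B)^T).
Proof.
split=> [i j|x].
  rewrite !mxE rmorph_sum; apply: eq_bigr => k _.
  by rewrite !mxE rmorphM /= conjCK mulrC.
have adjE : (map_mx Num.conj x)^T *m B
            = (map_mx Num.conj ((map_mx Num.conj B)^T *m x))^T.
  apply/matrixP => i k; rewrite !mxE rmorph_sum; apply: eq_bigr => j _.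
  by rewrite !mxE rmorphM /= conjCK mulrC.
rewrite mulmxA -(mulmxA _ _ x) adjE mxE; apply: sumr_ge0 => k _.
rewrite !mxE mulrC; exact: mulcJ_ge0.
Qed.

Definition complex_mx m n (A : 'M[RR]_(m, n)) : 'M[CC]_(m, n) :=
  map_mx (real_complex RR) A.

Lemma conj_complex_mx m n (A : 'M[RR]_(m, n)) :
  map_mx Num.conj (complex_mx A) = complex_mx A.
Proof. by apply/matrixP => i j; rewrite !mxE /= -[_^*]/(conjc _) /= oppr0. Qed.

Lemma has_ortho_rep_psd_fit n (e : rel 'I_n) d : has_ortho_rep e d ->
  exists M : 'M[CC]_n, [/\ psd M, fits e M & (\rank M <= d)%N].
Proof.
case=> phi [_ phi_orth].
pose B := complex_mx (\matrix_i phi i).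
have gramE i j : (B *m B^T) i j = real_complex RR (dotR (phi i) (phi j)).
  rewrite mxE dotRE rmorph_sum; apply: eq_bigr => k _.
  by rewrite !mxE rmorphM.
exists (B *m B^T); split.
- by have := psd_mul_adj B; rewrite conj_complex_mx.
- by move=> i j ij; rewrite gramE fmorph_eq0 phi_orth // negbK.
- exact: mulmx_max_rank.
Qed.

Lemma has_ortho_rep_mvr (V : finType) (e : rel V) : symmetric e ->
  has_ortho_rep e (mvr e).
Proof.
by move=> e_sym; apply: least_natP; exists #|{: V * V}|;
  apply: has_ortho_rep_incidence.
Qed.

Lemma mr_plus_le_mvr n (e : rel 'I_n) : symmetric e -> (mr_plus e <= mvr e)%N.
Proof.
move=> /has_ortho_rep_mvr/has_ortho_rep_psd_fit[M [M_psd M_fit M_rank]].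
by apply: leq_trans M_rank; apply: least_nat_le; exists M.
Qed.

Lemma mr_le_mr_plus n (e : rel 'I_n) : symmetric e -> (mr e <= mr_plus e)%N.
Proof.
move=> /has_ortho_rep_mvr/has_ortho_rep_psd_fit[M [M_psd M_fit _]].
have [|M' [[M'_herm _] M'_fit M'_rank]] := @least_natP (fun r =>
  exists M : 'M[CC]_n, [/\ psd M, fits e M & \rank M = r]).
  by exists (\rank M), M.
by apply: least_nat_le; exists M'.
Qed.

Lemma simple_graph_compl (V : finType) (e : rel V) :
  simple_graph e -> simple_graph (compl_graph e).
Proof.
case=> e_sym _; split=> [x y|x]; last by rewrite /compl_graph eqxx.
by rewrite /compl_graph eq_sym e_sym.
Qed.

Theorem proposition3p4 :
  (forall (n : nat) (e : rel 'I_n), (0 < n)%N -> simple_graph e ->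
     complement_critical e -> (mvr e + mvr (compl_graph e) <= n + 2)%N) ->
  forall (n : nat) (e : rel 'I_n), (0 < n)%N -> simple_graph e ->
    [/\ (mvr e + mvr (compl_graph e) <= n + 2)%N,
        (mr_plus e + mr_plus (compl_graph e) <= n + 2)%N &
        (mr e + mr (compl_graph e) <= n + 2)%N].
Proof.
move=> critical_bound n e n_gt0 e_simple.
have [[e_sym _] [ce_sym _]] := (e_simple, simple_graph_compl e_simple).
have mvr_bound := mvr_sum_bound critical_bound n_gt0 e_simple.
have mr_plus_bound : (mr_plus e + mr_plus (compl_graph e) <= n + 2)%N.
  exact: leq_trans (leq_add (mr_plus_le_mvr e_sym) (mr_plus_le_mvr ce_sym)) _.
split=> //.
exact: leq_trans (leq_add (mr_le_mr_plus e_sym) (mr_le_mr_plus ce_sym)) _.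
Qed.
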